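(* Let $T$ be a prae-dilator and let $(X,\iota_X,L_X)$ be a Bachmann-Howard system for $T$, and let $\vartheta_X:T_X\to\vartheta_T(X)$ be given by $\vartheta_X(\sigma)=\vartheta\sigma$. Then for all $\sigma,\tau\in T_X$: (i) if $\sigma<_{T_X}\tau$ and $[\iota_X]^{<\omega}(\operatorname{supp}^T_X(\sigma))<^{\operatorname{fin}}_{\vartheta_T(X)}\vartheta_X(\tau)$, then $\vartheta_X(\sigma)<_{\vartheta_T(X)}\vartheta_X(\tau)$; (ii) $[\iota_X]^{<\omega}(\operatorname{supp}^T_X(\sigma))<^{\operatorname{fin}}_{\vartheta_T(X)}\vartheta_X(\sigma)$.
   Context: The finite subset functor $[\cdot]^{<\omega}$ sends a set $X$ to the set of its finite subsets and a function $f$ to $[f]^{<\omega}(a)=\{f(x)\mid x\in a\}$; subsets of linear orders are regarded as suborders. A prae-dilator consists of an endofunctor $X\mapsto T_X$ on the category of linear orders (morphisms: order embeddings) and a natural transformation $\operatorname{supp}^T:T\Rightarrow[\cdot]^{<\omega}$ such that for every linear order $X$ and every $\sigma\in T_X$ we have $\sigma\in\operatorname{rng}(T_{\iota_\sigma})$, where $\iota_\sigma:\operatorname{supp}^T_X(\sigma)\hookrightarrow X$ is the inclusion. For a linear order $Z$ and finite $a,b\subseteq Z$ write $a<^{\operatorname{fin}}_Z b$ iff for every $s\in a$ there is $t\in b$ with $s<_Z t$; $\leq^{\operatorname{fin}}_Z$ is defined analogously with $\leq_Z$; singletons $\{s\}$ are written $s$. For a linear order $X$ let $\vartheta_T(X)$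 be the set of formal terms $\vartheta\sigma$ with $\sigma\in T_X$. A Bachmann-Howard system (for $T$) is a triple $(X,\iota_X,L_X)$ with $X$ a linear order, $\iota_X:X\to\vartheta_T(X)$ and $L_X:X\to\omega$ functions, such that $L_{\vartheta_T(X)}\circ\iota_X=L_X$, where $L_{\vartheta_T(X)}(\vartheta\sigma):=\max\{L_X(x)\mid x\in\operatorname{supp}^T_X(\sigma)\}+1$ (maximum of the empty set is $0$). For such a system the linear order $\vartheta\sigma<_{\vartheta_T(X)}\vartheta\tau$ is defined by recursion on $L_{\vartheta_T(X)}(\vartheta\sigma)+L_{\vartheta_T(X)}(\vartheta\tau)$ to hold iff either (a) $\sigma<_{T_X}\tau$ and $[\iota_X]^{<\omega}(\operatorname{supp}^T_X(\sigma))<^{\operatorname{fin}}_{\vartheta_T(X)}\vartheta\tau$, or (b) $\tau<_{T_X}\sigma$ and $\vartheta\sigma\leq^{\operatorname{fin}}_{\vartheta_T(X)}[\iota_X]^{<\omega}(\operatorname{supp}^T_X(\tau))$. *)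

From Stdlib Require Import List Arith Wf_nat PeanoNat ProofIrrelevance.
Import ListNotations.

Set Implicit Arguments.

Record LinOrd := {
  carrier :> Type;
  lt : carrier -> carrier -> Prop;
  lt_irrefl : forall x, ~ lt x x;
  lt_trans : forall x y z, lt x y -> lt y z -> lt x z;
  lt_total : forall x y, lt x y \/ x = y \/ lt y x
}.
Arguments lt {l} _ _.

Record Emb (X Y : LinOrd) := {
  emb :> X -> Y;
  emb_lt : forall x y, lt x y <-> lt (emb x) (emb y)
}.

Definition emb_id (X : LinOrd) : Emb X X :=
  {| emb := fun x => x; emb_lt := fun x y => iff_refl _ |}.

Definition emb_comp (X Y Z : LinOrd) (g : Emb Y Z) (f : Emb X Y) : Emb X Z.
Proof.
  refine {| emb := fun x => g (f x) |}.
  intros x y. rewrite (emb_lt f x y). apply (emb_lt g).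
Defined.

Definition subOrd (X : LinOrd) (P : X -> Prop) : LinOrd.
Proof.
  refine {| carrier := {x : X | P x};
            lt := fun a b => lt (proj1_sig a) (proj1_sig b) |}.
  - intros [x px]; apply lt_irrefl.
  - intros [x px] [y py] [z pz]; apply lt_trans.
  - intros [x px] [y py]; simpl.
    destruct (lt_total X x y) as [h | [h | h]]; auto.
    right; left; subst y; f_equal; apply proof_irrelevance.
Defined.

Definition incl_emb (X : LinOrd) (P : X -> Prop) : Emb (subOrd X P) X :=
  {| emb := fun a : subOrd X P => proj1_sig a; emb_lt := fun a b => iff_refl _ |}.

(** Prae-dilators. Finite subsets of X are represented by lists over X
    (read as the set of their members); naturality of supp is stated as
    equality of the represented sets. *)
Record PraeDilator := {
  Tobj : LinOrd -> LinOrd;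
  Tmor : forall X Y : LinOrd, Emb X Y -> Emb (Tobj X) (Tobj Y);
  Tmor_id : forall (X : LinOrd) (x : Tobj X), Tmor (emb_id X) x = x;
  Tmor_comp : forall (X Y Z : LinOrd) (f : Emb X Y) (g : Emb Y Z) (x : Tobj X),
      Tmor (emb_comp g f) x = Tmor g (Tmor f x);
  supp : forall X : LinOrd, Tobj X -> list X;
  supp_nat : forall (X Y : LinOrd) (f : Emb X Y) (s : Tobj X) (y : Y),
      In y (supp Y (Tmor f s)) <-> In y (map f (supp X s));
  supp_cond : forall (X : LinOrd) (s : Tobj X),
      exists s0 : Tobj (subOrd X (fun x => In x (supp X s))),
        Tmor (incl_emb X (fun x => In x (supp X s))) s0 = s
}.
Arguments Tmor p {X Y} _.
Arguments supp p {X} _.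

Inductive ThetaT (T : PraeDilator) (X : LinOrd) : Type :=
| vartheta : Tobj T X -> ThetaT T X.
Arguments vartheta {T X} _.

Definition varthetaX (T : PraeDilator) (X : LinOrd) (s : Tobj T X) : ThetaT T X :=
  vartheta s.
Arguments varthetaX {T X} _.

Definition Lth (T : PraeDilator) (X : LinOrd) (L : X -> nat) (a : ThetaT T X) : nat :=
  match a with vartheta s => S (fold_right Nat.max 0 (map L (supp T s))) end.

Definition BHSystem (T : PraeDilator) (X : LinOrd)
  (iota : X -> ThetaT T X) (L : X -> nat) : Prop :=
  forall x, Lth L (iota x) = L x.

Definition fin_rel (A : Type) (R : A -> A -> Prop) (a b : list A) : Prop :=
  forall s, In s a -> exists t, In t b /\ R s t.

Section ThetaOrder.
Variables (T : PraeDilator) (X : LinOrd) (iota : X -> ThetaT T X) (L : X -> nat).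

Definition th_measure (p : ThetaT T X * ThetaT T X) : nat :=
  Lth L (fst p) + Lth L (snd p).

(* One step of the recursion on L(vartheta sigma) + L(vartheta tau).
   Recursive calls are made only on pairs of strictly smaller measure
   (which, for a Bachmann-Howard system, is always the case). *)
Definition th_step (p : ThetaT T X * ThetaT T X)
  (rec : forall q, th_measure q < th_measure p -> Prop) : Prop :=
  let rec' q := match lt_dec (th_measure q) (th_measure p) with
                | left h => rec q h
                | right _ => False
                end in
  let '(a, b) := p in
  match a, b with
  | vartheta s, vartheta t =>
      (lt s t /\ forall x, In x (supp T s) -> rec' (iota x, vartheta t))
      \/
      (lt t s /\ exists y, In y (supp T t) /\
                   (rec' (vartheta s, iota y) \/ vartheta s = iota y))
  end.

Definition theta_lt (a b : ThetaT T X) : Prop :=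
  Fix (well_founded_ltof _ th_measure) (fun _ => Prop) th_step (a, b).

End ThetaOrder.

(* Part (i) is clause (a) of the definition of the order, once one checks that
   for a Bachmann-Howard system the recursion never hits its measure guard.
   For part (ii), call z a hereditary support point of sigma if it is reached
   from sigma by repeatedly passing from a term to its support and from a
   support point x to the term iota x.  One shows iota z < vartheta sigma for
   every such z, by induction on L z + L(vartheta sigma): writing
   iota z = vartheta rho, the case rho = sigma is excluded by comparing
   L-values; if rho < sigma, clause (a) reduces the claim to the support of
   rho, whose points are again hereditary support points of sigma; if
   sigma < rho, clause (b) applies with the support point of sigma through
   which z was reached. *)

From Stdlib Require Import List Arith Lia Wf_nat FunctionalExtensionality.
Import ListNotations.

Section ThetaOrderFacts.
Context {T : PraeDilator} {X : LinOrd} {iota : X -> ThetaT T X} {L : X -> nat}.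

Lemma theta_lt_unfold (a b : ThetaT T X) :
  theta_lt iota L a b =
  th_step iota L (a, b)
    (fun q _ => Fix (well_founded_ltof _ (th_measure L)) (fun _ => Prop) (th_step iota L) q).
Proof.
  unfold theta_lt.
  apply (Fix_eq (well_founded_ltof _ (th_measure L)) (fun _ => Prop) (th_step iota L)).
  intros p f g Hfg.
  replace g with f; [reflexivity|].
  apply functional_extensionality_dep; intro q.
  apply functional_extensionality_dep; intro h. apply Hfg.
Qed.

Lemma L_supp_lt_Lth {s : Tobj T X} {x : X} : In x (supp T s) -> L x < Lth L (vartheta s).
Proof.
  intro Hx. simpl. apply Nat.lt_succ_r.
  assert (Hall : Forall (fun k => k <= list_max (map L (supp T s))) (map L (supp T s)))
    by (apply list_max_le; reflexivity).
  rewrite Forall_forall in Hall. apply Hall, in_map, Hx.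
Qed.

Hypothesis HBH : BHSystem iota L.

Lemma theta_lt_vartheta (s t : Tobj T X) :
  theta_lt iota L (vartheta s) (vartheta t) <->
  (lt s t /\ forall x, In x (supp T s) -> theta_lt iota L (iota x) (vartheta t)) \/
  (lt t s /\ exists y, In y (supp T t) /\
     (theta_lt iota L (vartheta s) (iota y) \/ vartheta s = iota y)).
Proof.
  assert (Hmeasure_a : forall x, In x (supp T s) ->
    th_measure L (iota x, vartheta t) < th_measure L (vartheta s, vartheta t)).
  { intros x Hx. unfold th_measure; simpl fst; simpl snd. rewrite HBH.
    pose proof (L_supp_lt_Lth Hx). lia. }
  assert (Hmeasure_b : forall y, In y (supp T t) ->
    th_measure L (vartheta s, iota y) < th_measure L (vartheta s, vartheta t)).
  { intros y Hy. unfold th_measure; simpl fst; simpl snd. rewrite HBH.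
    pose proof (L_supp_lt_Lth Hy). lia. }
  rewrite theta_lt_unfold. simpl th_step.
  split; intros [[Hst Ha] | [Hts [y [Hy Hb]]]];
    [left | right | left | right]; (split; [assumption|]).
  1, 3: intros x Hx; specialize (Ha x Hx);
    destruct (lt_dec _ _) as [_|h]; [exact Ha | contradiction (h (Hmeasure_a x Hx))].
  all: exists y; split; [exact Hy|];
    destruct (lt_dec _ _) as [_|h]; [exact Hb | contradiction (h (Hmeasure_b y Hy))].
Qed.

Inductive hered_supp : Tobj T X -> X -> Prop :=
| hered_supp_base {s z} : In z (supp T s) -> hered_supp s z
| hered_supp_iota {s x r z} :
    In x (supp T s) -> iota x = vartheta r -> hered_supp r z -> hered_supp s z.

Lemma hered_supp_extend {s z r w} :
  hered_supp s z -> iota z = vartheta r -> In w (supp T r) -> hered_supp s w.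
Proof.
  induction 1 as [s z Hz | s x r' z Hx Hr' _ IH]; intros Hr Hw.
  - exact (hered_supp_iota Hz Hr (hered_supp_base Hw)).
  - exact (hered_supp_iota Hx Hr' (IH Hr Hw)).
Qed.

Lemma hered_supp_L_lt {s z} : hered_supp s z -> L z < Lth L (vartheta s).
Proof.
  induction 1 as [s z Hz | s x r z Hx Hr _ IH].
  - exact (L_supp_lt_Lth Hz).
  - pose proof (L_supp_lt_Lth Hx). pose proof (HBH x) as E. rewrite Hr in E. lia.
Qed.

Lemma iota_lt_of_hered_supp {s z} :
  hered_supp s z -> theta_lt iota L (iota z) (vartheta s).
Proof.
  remember (L z + Lth L (vartheta s)) as n eqn:Hn. revert s z Hn.
  induction n as [n IH] using lt_wf_ind. intros s z Hn Hd.
  pose proof (hered_supp_L_lt Hd) as HLz.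
  destruct (iota z) as [q] eqn:Hq.
  assert (HLq : Lth L (vartheta q) = L z) by (rewrite <- Hq; apply HBH).
  apply theta_lt_vartheta.
  destruct (lt_total _ q s) as [Hqs | [<- | Hsq]].
  - left. split; [exact Hqs|]. intros w Hw.
    assert (HLw : L w < L z) by (rewrite <- HLq; apply L_supp_lt_Lth, Hw).
    apply (IH (L w + Lth L (vartheta s))); [lia | reflexivity |].
    exact (hered_supp_extend Hd Hq Hw).
  - lia.
  - right. split; [exact Hsq|].
    destruct Hd as [s z Hz | s x r z Hx Hr Hd].
    + exists z. split; [exact Hz | right; symmetry; exact Hq].
    + exists x. split; [exact Hx | left].
      pose proof (L_supp_lt_Lth Hx). pose proof (hered_supp_L_lt Hd).
      assert (HLr : Lth L (vartheta r) = L x) by (rewrite <- Hr; apply HBH).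
      rewrite Hr, <- Hq.
      apply (IH (L z + Lth L (vartheta r))); [lia | reflexivity | exact Hd].
Qed.

End ThetaOrderFacts.

Theorem proposition3p6 (T : PraeDilator) (X : LinOrd)
  (iota : X -> ThetaT T X) (L : X -> nat) (HBH : BHSystem iota L) :
  (forall s t : Tobj T X,
      lt s t ->
      fin_rel (theta_lt iota L) (map iota (supp T s)) [varthetaX t] ->
      theta_lt iota L (varthetaX s) (varthetaX t))
  /\
  (forall s : Tobj T X,
      fin_rel (theta_lt iota L) (map iota (supp T s)) [varthetaX s]).
Proof.
  split.
  - intros s t Hst Hsupp. apply (theta_lt_vartheta HBH).
    left. split; [exact Hst|]. intros x Hx.
    destruct (Hsupp (iota x) (in_map iota _ _ Hx)) as [u [[<- | []] Hu]].
    exact Hu.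
  - intros s a Ha. apply in_map_iff in Ha. destruct Ha as [x [<- Hx]].
    exists (varthetaX s). split; [left; reflexivity|].
    exact (iota_lt_of_hered_supp HBH (hered_supp_base Hx)).
Qed.
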